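(* Let $M:[0,1]\to\mathbb{R}^d$ be a continuous martingale with $M_0=0$, let $D$ be a partition of $[0,1]$ and $M^D$ the Hoff process of $M$. If $\delta\ge|D|$ then \[ \sup_{|t-s|\le\delta}|M^D_{s,t}|\le 3\sup_{|t-s|\le2\delta}|M_{s,t}|. \]
   Context: A partition $D=(t_i)_{i=0}^n$ of $[0,1]$ satisfies $0=t_0<\dots<t_n=1$, mesh $|D|=\max_i|t_{i+1}-t_i|$, $t_i^*=\tfrac12(t_i+t_{i+1})$. The Hoff process of a continuous path $x:[0,1]\to\mathbb{R}^d$ with $x_0=0$ is the piecewise-linear path $x^D=(x^{D,b},x^{D,f}):[0,1]\to\mathbb{R}^{2d}$ given by: $x^D_u=(x_{t_{i-1}}+\frac{u-t_i}{t_i^*-t_i}(x_{t_i}-x_{t_{i-1}});\,x_{t_{i+1}})$ for $u\in[t_i,t_i^* )$, $i=1,\dots,n-1$; $x^D_u=(x_{t_i};\,x_{t_{i+1}}+\frac{u-t_i^*}{t_{i+1}-t_i^*}(x_{t_{i+2}}-x_{t_{i+1}}))$ for $u\in[t_i^*,t_{i+1})$, $i=0,\dots,n-2$; $x^D_u=(0;\,\frac{u}{t_0^*}x_{t_1})$ for $u\in[0,t_0^* )$; $x^D_u=(x_{t_{n-1}}+\frac{u-t_{n-1}^*}{t_n-t_{n-1}^*}(x_{t_n}-x_{t_{n-1}});\,x_{t_n})$ for $u\in[t_{n-1}^*,1]$. Increments $x_{s,t}=x_t-x_s$; suprema are over $s,t\in[0,1]$. *)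

From HB Require Import structures.
From mathcomp Require Import all_boot all_order all_algebra.
From mathcomp Require Import all_classical all_reals all_analysis.
Set Implicit Arguments. Unset Strict Implicit. Unset Printing Implicit Defensive.
Import Order.TTheory GRing.Theory Num.Theory.
Import numFieldNormedType.Exports.
Local Open Scope classical_set_scope.
Local Open Scope ring_scope.

Section Hoff.
Variables (R : realType) (d : nat).

Definition enorm (v : 'rV[R]_d) : R := Num.sqrt (\sum_(i < d) v ord0 i ^+ 2).

Definition enorm2 (p : 'rV[R]_d * 'rV[R]_d) : R :=
  Num.sqrt (\sum_(i < d) p.1 ord0 i ^+ 2 + \sum_(i < d) p.2 ord0 i ^+ 2).

Definition is_partition (n : nat) (t : nat -> R) : Prop :=
  t 0%N = 0 /\ t n = 1 /\ (forall i, (i < n)%N -> t i < t i.+1).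

Definition mesh (n : nat) (t : nat -> R) : R :=
  \big[Num.max/0]_(i < n) (t i.+1 - t i).

Definition midp (t : nat -> R) (i : nat) : R := (t i + t i.+1) / 2.

(* index i with t_i <= u < t_{i+1} (for u in [0,1)); equals n-1 for u = 1. *)
Definition pidx (n : nat) (t : nat -> R) (u : R) : nat :=
  \max_(i < n | t i <= u) (i : nat).

(* Hoff process x^D : [0,1] -> R^{2d}, as a pair (backward ; forward). *)
Definition hoff (n : nat) (t : nat -> R) (x : R -> 'rV[R]_d) (u : R)
  : 'rV[R]_d * 'rV[R]_d :=
  let i := pidx n t u in
  if u < midp t i then
    if i == 0%N then (0, (u / midp t 0%N) *: x (t 1%N))
    else (x (t i.-1) + ((u - t i) / (midp t i - t i)) *: (x (t i) - x (t i.-1)),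
          x (t i.+1))
  else
    if i == n.-1 then
      (x (t n.-1) + ((u - midp t n.-1) / (t n - midp t n.-1)) *: (x (t n) - x (t n.-1)),
       x (t n))
    else
      (x (t i),
       x (t i.+1) + ((u - midp t i) / (t i.+1 - midp t i)) *: (x (t i.+2) - x (t i.+1))).

End Hoff.

From HB Require Import structures.
From mathcomp Require Import all_boot all_order all_algebra.
From mathcomp Require Import all_classical all_reals all_analysis.
From mathcomp Require Import ring lra zify.
Set Implicit Arguments. Unset Strict Implicit. Unset Printing Implicit Defensive.

Import Order.TTheory GRing.Theory Num.Theory.
Import numFieldNormedType.Exports.
Local Open Scope classical_set_scope.
Local Open Scope ring_scope.

(* Since consecutive partition points are at most |D| <= delta apart, the
   backward block of x^D at time u lies on a chord joining two values x a, x b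
   with a, b in [u - 2 delta, u + delta], and the forward block on such a chord
   with a, b in [u - delta, u + 2 delta].  For |u - s| <= delta all these times
   are within 2 delta of min(s, u) (backward) or max(s, u) (forward), so by
   convexity of the norm each block of x^D_{s,u} has norm at most 2 S, where S
   is the supremum on the right; hence |x^D_{s,u}| <= sqrt 8 S <= 3 S.  Only
   continuity of x (to make S finite) is used, not the martingale property. *)

Lemma sqrtr_le (R : rcfType) (a b : R) : 0 <= b -> a <= b ^+ 2 -> Num.sqrt a <= b.
Proof. by move=> b0 ab; rewrite -(ger0_norm b0) -sqrtr_sqr ler_wsqrtr. Qed.

Lemma divr_in01 (R : realFieldType) (a b : R) :
  0 <= a -> a <= b -> 0 < b -> 0 <= a / b <= 1.
Proof.
move=> a0 ab b0; apply/andP; split; first exact: divr_ge0 (ltW b0).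
by rewrite ler_pdivrMr // mul1r.
Qed.

Section EuclideanNorm.
Variables (R : realType) (d : nat).
Implicit Types (v w : 'rV[R]_d) (a : R).

Lemma enorm_ge0 v : 0 <= enorm v.
Proof. exact: sqrtr_ge0. Qed.

Lemma sqr_enorm v : enorm v ^+ 2 = \sum_(i < d) v ord0 i ^+ 2.
Proof. by rewrite sqr_sqrtr // sumr_ge0 // => i _; rewrite sqr_ge0. Qed.

Lemma sqr_dot_le v w :
  (\sum_(i < d) v ord0 i * w ord0 i) ^+ 2 <= enorm v ^+ 2 * enorm w ^+ 2.
Proof.
rewrite !sqr_enorm.
set A := \sum_i _ ^+ 2; set B := \sum_i _ ^+ 2; set C := \sum_i _.
have B0 : 0 <= B by rewrite sumr_ge0 // => i _; rewrite sqr_ge0.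
have [Bz|Bn0] := eqVneq B 0.
  have w0 i : w ord0 i = 0.
    apply/eqP; rewrite -sqrf_eq0; apply/eqP/(psumr_eq0P _ Bz) => // j _.
    by rewrite sqr_ge0.
  by rewrite /C big1 ?expr0n ?Bz ?mulr0 // => i _; rewrite w0 mulr0.
have E : \sum_(i < d) (B * v ord0 i - C * w ord0 i) ^+ 2 = B * (A * B - C ^+ 2).
  rewrite (eq_bigr (fun i => B ^+ 2 * v ord0 i ^+ 2 - 2 * B * C * (v ord0 i * w ord0 i)
      + C ^+ 2 * w ord0 i ^+ 2)) => [|i _]; last by ring.
  by rewrite big_split sumrB -!mulr_sumr -/A -/B -/C /=; ring.
have : 0 <= B * (A * B - C ^+ 2) by rewrite -E sumr_ge0 // => i _; rewrite sqr_ge0.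
by rewrite pmulr_rge0 ?lt_def ?Bn0 // subr_ge0 mulrC.
Qed.

Lemma dot_le_enorm v w : \sum_(i < d) v ord0 i * w ord0 i <= enorm v * enorm w.
Proof.
apply: le_trans (ler_norm _) _.
rewrite -sqrtr_sqr sqrtr_le ?mulr_ge0 ?enorm_ge0 // exprMn.
exact: sqr_dot_le.
Qed.

Lemma enormD v w : enorm (v + w) <= enorm v + enorm w.
Proof.
rewrite {1}/enorm sqrtr_le ?addr_ge0 ?enorm_ge0 //.
have -> : \sum_(i < d) (v + w) ord0 i ^+ 2 = enorm v ^+ 2 + enorm w ^+ 2 +
    2 * \sum_(i < d) v ord0 i * w ord0 i.
  rewrite !sqr_enorm mulr_sumr -!big_split /=.
  by apply: eq_bigr => i _; rewrite mxE; ring.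
have := dot_le_enorm v w; lra.
Qed.

Lemma enormZ a v : enorm (a *: v) = `|a| * enorm v.
Proof.
rewrite /enorm -sqrtr_sqr -sqrtrM ?sqr_ge0 // mulr_sumr.
by congr Num.sqrt; apply: eq_bigr => i _; rewrite mxE exprMn.
Qed.

Lemma enormN v : enorm (- v) = enorm v.
Proof. by rewrite -scaleN1r enormZ normrN1 mul1r. Qed.

Lemma enormB v w : enorm (v - w) <= enorm v + enorm w.
Proof. by rewrite -(enormN w) enormD. Qed.

Lemma enorm_segment_le (p q c : 'rV[R]_d) a S :
  0 <= a <= 1 -> enorm (p - c) <= S -> enorm (q - c) <= S ->
  enorm (p + a *: (q - p) - c) <= S.
Proof.
move=> /andP[a0 a1] pS qS.
have -> : p + a *: (q - p) - c = (1 - a) *: (p - c) + a *: (q - c).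
  by apply/rowP => j; rewrite !mxE; ring.
apply: le_trans (enormD _ _) _.
rewrite !enormZ ger0_norm ?subr_ge0 // ger0_norm //.
have := enorm_ge0 (p - c); nra.
Qed.

Lemma enorm_le_mx_norm v : enorm v <= Num.sqrt d%:R * `|v|.
Proof.
rewrite sqrtr_le ?mulr_ge0 ?sqrtr_ge0 // exprMn sqr_sqrtr // mulr_natl.
have -> : `|v| ^+ 2 *+ d = \sum_(i < d) `|v| ^+ 2 by rewrite sumr_const card_ord.
rewrite ler_sum // => i _.
rewrite -real_normK ?num_real // lerXn2r ?nnegrE ?normr_ge0 //.
rewrite [`|v|]mx_normrE.
exact: (le_bigmax 0 (fun ij : 'I_1 * 'I_d => `|v ij.1 ij.2|) (ord0, i)).
Qed.

Lemma enorm2E (p : 'rV[R]_d * 'rV[R]_d) :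
  enorm2 p = Num.sqrt (enorm p.1 ^+ 2 + enorm p.2 ^+ 2).
Proof. by rewrite !sqr_enorm. Qed.

End EuclideanNorm.

Section Partition.
Variables (R : realType) (n : nat) (t : nat -> R) (delta : R).
Hypotheses (tP : is_partition n t) (mesh_le : mesh n t <= delta).

Lemma partition_n_gt0 : (0 < n)%N.
Proof.
case: tP => t0 [tn _]; case: n tn => // tn.
by move: t0; rewrite tn => /eqP; rewrite oner_eq0.
Qed.

Lemma partition_le i j : (i <= j <= n)%N -> t i <= t j.
Proof.
case: tP => _ [_ t_lt] /andP[ij jn].
have le_in : {in [pred k | k <= n]%N &, {homo t : k l / (k <= l)%N >-> k <= l}}.
  apply: Order.NatMonotonyTheory.nondecn_inP => [k l m kn ln /andP[_ ml]|k kn kSn].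
    by rewrite inE (leq_trans (ltnW ml)).
  exact/ltW/t_lt.
by apply: le_in; rewrite ?inE ?(leq_trans ij).
Qed.

Lemma partition_in01 i : (i <= n)%N -> 0 <= t i <= 1.
Proof.
case: tP => t0 [tn _] iln.
by rewrite -{1}t0 -tn !partition_le ?iln ?leqnn.
Qed.

Lemma step_gt0 i : (i < n)%N -> 0 < t i.+1 - t i.
Proof. by case: tP => _ [_ t_lt] ilt; rewrite subr_gt0 t_lt. Qed.

Lemma step_le i : (i < n)%N -> t i.+1 - t i <= delta.
Proof.
move=> ilt; apply: le_trans mesh_le.
exact: (le_bigmax 0 (fun k : 'I_n => t k.+1 - t k) (Ordinal ilt)).
Qed.

Lemma pidx_lt u : (pidx n t u < n)%N.
Proof.
have n0 := partition_n_gt0.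
apply: (@leq_ltn_trans n.-1); last by rewrite prednK.
by apply/bigmax_leqP => i _; rewrite -ltnS prednK.
Qed.

Lemma pidx_le u : 0 <= u -> t (pidx n t u) <= u.
Proof.
move=> u0; have n0 := partition_n_gt0.
have ne : (0 < #|[pred i : 'I_n | (t i <= u)%R]|)%N.
  by apply/card_gt0P; exists (Ordinal n0); rewrite inE /=; case: tP => ->.
rewrite /pidx; have [i tiu ->] := eq_bigmax_cond (fun i : 'I_n => nat_of_ord i) ne.
by move: tiu; rewrite inE.
Qed.

Lemma lt_pidxS u : ((pidx n t u).+1 < n)%N -> u < t (pidx n t u).+1.
Proof.
move=> iSn; rewrite ltNge; apply/negP => tiSu.
have := @leq_bigmax_cond _ [pred i : 'I_n | t i <= u] (fun i => nat_of_ord i)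
  (Ordinal iSn) tiSu.
by rewrite /= -/(pidx n t u) ltnn.
Qed.

Lemma pidx_bracket u : 0 <= u <= 1 ->
  t (pidx n t u) <= u <= t (pidx n t u).+1.
Proof.
move=> /andP[u0 u1]; rewrite pidx_le //=.
have := pidx_lt u; rewrite leq_eqVlt => /orP[/eqP iSn|/lt_pidxS/ltW //].
by case: tP => _ [tn _]; rewrite iSn tn.
Qed.

End Partition.

Section Chords.
Variables (R : realType) (d : nat) (x : R -> 'rV[R]_d).

Definition in_window (lo hi a : R) : bool := (0 <= a <= 1) && (lo <= a <= hi).

Definition on_chord (lo hi : R) (v : 'rV[R]_d) : Prop :=
  exists a b lam, [/\ 0 <= lam <= 1, v = x a + lam *: (x b - x a),
                      in_window lo hi a & in_window lo hi b].

Lemma on_chord_intro lo hi a b lam :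
  0 <= lam <= 1 -> in_window lo hi a -> in_window lo hi b ->
  on_chord lo hi (x a + lam *: (x b - x a)).
Proof. by move=> lam01 wa wb; exists a, b, lam. Qed.

Lemma on_chord_point lo hi a : in_window lo hi a -> on_chord lo hi (x a).
Proof.
move=> wa; rewrite -[x a]addr0 -(scale0r (x a - x a)).
by apply: on_chord_intro; rewrite ?lexx ?ler01.
Qed.

Lemma on_chord_dist lo hi v c S : on_chord lo hi v ->
  (forall a, in_window lo hi a -> enorm (x a - x c) <= S) ->
  enorm (v - x c) <= S.
Proof.
by move=> [a [b [lam [lam01 -> wa wb]]]] xS; apply: enorm_segment_le; rewrite ?xS.
Qed.

Lemma on_chord_sub_le lo1 hi1 lo2 hi2 v w c S :
  on_chord lo1 hi1 v -> on_chord lo2 hi2 w ->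
  (forall a, in_window lo1 hi1 a -> enorm (x a - x c) <= S) ->
  (forall a, in_window lo2 hi2 a -> enorm (x a - x c) <= S) ->
  enorm (v - w) <= 2 * S.
Proof.
move=> vc wc xS1 xS2; have -> : v - w = (v - x c) - (w - x c).
  by rewrite opprB addrA subrK.
apply: le_trans (enormB _ _) _.
by rewrite mulr2n mulrDl mul1r lerD // (on_chord_dist vc, on_chord_dist wc).
Qed.

End Chords.

Section HoffWindows.
Variables (R : realType) (d : nat) (x : R -> 'rV[R]_d).
Variables (n : nat) (t : nat -> R) (delta : R).
Hypotheses (tP : is_partition n t) (mesh_le : mesh n t <= delta) (x0 : x 0 = 0).

Lemma hoff_fst_on_chord u : 0 <= u <= 1 ->
  on_chord x (u - 2 * delta) (u + delta) (hoff n t x u).1.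
Proof.
move=> u01; have ilt := pidx_lt tP u; have ui := pidx_bracket tP u01.
rewrite /hoff /midp /in_window /=; move: ilt ui; move: (pidx n t u) => i ilt ui.
have ti := partition_in01 tP (ltnW ilt); have tiS := partition_in01 tP ilt.
have step_i := step_le mesh_le ilt; have step_i_gt0 := step_gt0 tP ilt.
case: ltP => um; case: eqP => [i0|/eqP i0] /=.
- rewrite -x0; apply: on_chord_point; rewrite /in_window.
  case: tP => t0 _; rewrite i0 t0 in um step_i step_i_gt0; lra.
- case: i i0 ilt ui ti tiS step_i step_i_gt0 um => // j _ ilt ui ti tiS.
  move=> step_i step_i_gt0 um /=.
  have tj := partition_in01 tP (ltnW (ltnW ilt)).
  have step_j := step_le mesh_le (ltnW ilt); have step_j_gt0 := step_gt0 tP (ltnW ilt).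
  apply: on_chord_intro; rewrite /in_window; try lra.
  by apply: divr_in01; lra.
- have nE : n = i.+1 by lia.
  rewrite nE /=; apply: on_chord_intro; rewrite /in_window; try lra.
  by apply: divr_in01; lra.
- by apply: on_chord_point; rewrite /in_window; lra.
Qed.

Lemma hoff_snd_on_chord u : 0 <= u <= 1 ->
  on_chord x (u - delta) (u + 2 * delta) (hoff n t x u).2.
Proof.
move=> u01; have ilt := pidx_lt tP u; have ui := pidx_bracket tP u01.
rewrite /hoff /midp /in_window /=; move: ilt ui; move: (pidx n t u) => i ilt ui.
have ti := partition_in01 tP (ltnW ilt); have tiS := partition_in01 tP ilt.
have step_i := step_le mesh_le ilt; have step_i_gt0 := step_gt0 tP ilt.
case: ltP => um; case: eqP => [i0|/eqP i0] /=.
- case: tP => t0 _; rewrite i0 t0 in um step_i step_i_gt0 tiS *.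
  rewrite -[_ *: x _]add0r -[x (t 1)]subr0 -x0.
  apply: on_chord_intro; rewrite /in_window; try lra.
  by apply: divr_in01; lra.
- by apply: on_chord_point; rewrite /in_window; lra.
- have nE : n = i.+1 by lia.
  by rewrite nE; apply: on_chord_point; rewrite /in_window; lra.
- have iSn : (i.+1 < n)%N by lia.
  have tiSS := partition_in01 tP iSn.
  have step_iS := step_le mesh_le iSn; have step_iS_gt0 := step_gt0 tP iSn.
  apply: on_chord_intro; rewrite /in_window; try lra.
  by apply: divr_in01; lra.
Qed.

Section HoffIncrements.
Variable S : R.
Hypothesis xS : forall a c, 0 <= a <= 1 -> 0 <= c <= 1 -> `|a - c| <= 2 * delta ->
  enorm (x a - x c) <= S.

Lemma hoff_fst_sub_le s u : 0 <= s <= 1 -> 0 <= u <= 1 -> `|u - s| <= delta ->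
  enorm ((hoff n t x u).1 - (hoff n t x s).1) <= 2 * S.
Proof.
wlog su : s u / s <= u => [wlog_su s01 u01 us|s01 u01].
  have [su|/ltW us'] := leP s u; first exact: wlog_su.
  by rewrite -enormN opprB; apply: wlog_su; rewrite // distrC.
rewrite ler_norml => us.
apply: (on_chord_sub_le (c := s) (hoff_fst_on_chord u01) (hoff_fst_on_chord s01));
  rewrite /in_window => a wa; apply: xS; rewrite ?ler_norml; lra.
Qed.

Lemma hoff_snd_sub_le s u : 0 <= s <= 1 -> 0 <= u <= 1 -> `|u - s| <= delta ->
  enorm ((hoff n t x u).2 - (hoff n t x s).2) <= 2 * S.
Proof.
wlog su : s u / s <= u => [wlog_su s01 u01 us|s01 u01].
  have [su|/ltW us'] := leP s u; first exact: wlog_su.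
  by rewrite -enormN opprB; apply: wlog_su; rewrite // distrC.
rewrite ler_norml => us.
apply: (on_chord_sub_le (c := u) (hoff_snd_on_chord u01) (hoff_snd_on_chord s01));
  rewrite /in_window => a wa; apply: xS; rewrite ?ler_norml; lra.
Qed.

End HoffIncrements.

End HoffWindows.

Section Increments.
Variables (R : realType) (d : nat) (x : R -> 'rV[R]_d).

Definition increments (h : R) : set R :=
  [set r | exists s u, [/\ 0 <= s <= 1, 0 <= u <= 1, `|u - s| <= h
                          & r = enorm (x u - x s)]].

Lemma increments_ubound h : {within `[0, 1], continuous x} ->
  has_ubound (increments h).
Proof.
move=> xc; have [B [_ xB]] :=
  compact_bounded (continuous_compact xc (@segment_compact R 0 1)).
have x_le a : 0 <= a <= 1 -> `|x a| <= B + 1.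
  by move=> a01; apply: xB; rewrite ?ltrDl //; exists a; rewrite //= in_itv.
exists (Num.sqrt d%:R * (2 * (B + 1))) => _ [s [u [s01 u01 _ ->]]].
apply: le_trans (enorm_le_mx_norm _) _.
rewrite ler_wpM2l ?sqrtr_ge0 // mulr2n mulrDl mul1r.
by apply: le_trans (ler_normB _ _) _; rewrite lerD ?x_le.
Qed.

Lemma increment_le_sup h s u : {within `[0, 1], continuous x} ->
  0 <= s <= 1 -> 0 <= u <= 1 -> `|u - s| <= h ->
  enorm (x u - x s) <= sup (increments h).
Proof.
move=> xc s01 u01 us.
by apply: ub_le_sup; [exact: increments_ubound | exists s, u].
Qed.

End Increments.

Theorem mainTheorem13 (R : realType) (d : nat) (x : R -> 'rV[R]_d)
  (n : nat) (t : nat -> R) (delta : R) :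
  {within `[0, 1], continuous x} ->
  x 0 = 0 ->
  is_partition n t ->
  mesh n t <= delta ->
  forall s u : R, 0 <= s <= 1 -> 0 <= u <= 1 -> `|u - s| <= delta ->
    enorm2 (hoff n t x u - hoff n t x s) <=
    3 * sup [set r : R | exists s' u' : R,
               [/\ 0 <= s' <= 1, 0 <= u' <= 1, `|u' - s'| <= 2 * delta
                 & r = enorm (x u' - x s')]].
Proof.
move=> xc x0 tP mesh_le s u s01 u01 us; set S := sup _.
have xS a c : 0 <= a <= 1 -> 0 <= c <= 1 -> `|a - c| <= 2 * delta ->
    enorm (x a - x c) <= S.
  by move=> a01 c01 ac; apply: increment_le_sup.
have fst_le := hoff_fst_sub_le tP mesh_le x0 xS s01 u01 us.
have snd_le := hoff_snd_sub_le tP mesh_le x0 xS s01 u01 us.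
have := enorm_ge0 ((hoff n t x u).1 - (hoff n t x s).1).
have := enorm_ge0 ((hoff n t x u).2 - (hoff n t x s).2).
rewrite enorm2E /= => snd_ge0 fst_ge0; apply: sqrtr_le; nra.
Qed.
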